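(* Consider the decremental maintenance procedure described in the context, with parameters satisfying $\ell=\Theta(\log n)$, $p=O(1/\log n)$ and $p\delta=\Omega(c)$. Then: - after initialization, the graph $H_\ell\cup D$ has $O(mp\log n+n\delta\log n)$ edges; - over any sequence of edge deletions issued to $G$, the graph $H_\ell\cup D$ undergoes $O(n\delta\log n)$ edge insertions in total.
   Context: Let $G=(V,E)$ be an undirected graph (parallel edges allowed, no self-loops) with $n$ vertices and $m$ edges $E=\{e_1,\dots,e_m\}$, subject to edge deletions. Fix integers $c\ge1$, $\delta>c$, $\ell\ge1$ and $p\in(0,1)$, and let $s=\lceil pm\rceil$. For $C\subseteq V$, $\partial_F(C)$ is the set of edges of $F$ with exactly one endpoint in $C$. **Initialization.** 1. Maintain graphs $G_0,\dots,G_\ell$, $H_0,\dots,H_\ell$ and $D$ on vertex set $V$. 2. Set all $G_i:=G$ and $D:=(V,\emptyset)$, and $H_0:=(V,\emptyset)$. 3. For $i=1,\dots,\ell$, choose a pairwise independent random function $r_i:\{1,\dots,s\}\to\{1,\dots,m\}$, with the $r_i$ mutually independent. Set $H_i:=H_{i-1}\cup(V,\{e_{r_i(1)},\dots,e_{r_i(s)}\})$. 4. Run CleanUp$(\emptyset)$. **Deletion of $e$.** Delete $e$ from $G$ and from $D$, then run CleanUp$(\{e\})$. **CleanUp$(A)$.** For $j=0,1,\dots,\ell$ in order: 1. Delete the edges of $A$ from $G_j$ and $H_j$. 2. While some edge of $H_j$ lies in a cut of $H_j$ of size $<c$, delete that edge from $H_j$. 3. While some connected component $C$ of $H_j$ has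 $S:=\partial_{G_j}(C)$ with $0<|S|<\delta$, add the edges of $S$ to $A$ and to $D$, and delete $S$ from $G_j$. The maintained certificate is $H_\ell\cup D$. *)

From HB Require Import structures.
From mathcomp Require Import all_boot all_order all_algebra.
From mathcomp Require Import all_classical all_reals all_analysis.

Set Implicit Arguments.
Unset Strict Implicit.
Unset Printing Implicit Defensive.

Import Order.TTheory GRing.Theory Num.Theory.

(* The graph G has vertex set 'I_n and edges e_1..e_m represented by the
   indices 'I_m (0-based), with endpoint map [ends] (parallel edges allowed;
   absence of self-loops is a hypothesis of the theorem).  Every maintained
   graph G_j, H_j, D is represented by its edge set {set 'I_m}. *)
Section Algorithm.
Variables (n m : nat) (ends : 'I_m -> 'I_n * 'I_n) (c delta l : nat).
Local Notation V := 'I_n.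
Local Notation E := 'I_m.

Definition bnd (F : {set E}) (C : {set V}) : {set E} :=
  [set e in F | ((ends e).1 \in C) != ((ends e).2 \in C)].

Definition adj (F : {set E}) : rel V := fun x y =>
  [exists e in F, (ends e == (x, y)) || (ends e == (y, x))].

Definition is_comp (F : {set E}) (C : {set V}) : Prop :=
  exists x : V, C = [set y | connect (adj F) x y].

Definition in_small_cut (F : {set E}) (e : E) : Prop :=
  exists C : {set V}, e \in bnd F C /\ #|bnd F C| < c.

(* algorithm state: G, the G_j, the H_j (j = 0..l, indexed by nat), D *)
Record state := State {
  stG : {set E};
  stGs : nat -> {set E};
  stHs : nat -> {set E};
  stD : {set E} }.

Definition cert (st : state) : {set E} := stHs st l :|: stD st.

Definition ins (st st' : state) : nat := #|cert st' :\: cert st|.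

Definition upd (f : nat -> {set E}) (j : nat) (X : {set E}) : nat -> {set E} :=
  fun k => if k == j then X else f k.

(* CleanUp step 1 at level j *)
Definition remA (j : nat) (A : {set E}) (st : state) : state :=
  State (stG st) (upd (stGs st) j (stGs st j :\: A))
        (upd (stHs st) j (stHs st j :\: A)) (stD st).

(* CleanUp step 2, one iteration: delete e from H_j *)
Definition delH (j : nat) (e : E) (st : state) : state :=
  State (stG st) (stGs st) (upd (stHs st) j (stHs st j :\ e)) (stD st).

(* CleanUp step 3, one iteration: add S to D, delete S from G_j *)
Definition cutS (j : nat) (S : {set E}) (st : state) : state :=
  State (stG st) (upd (stGs st) j (stGs st j :\: S)) (stHs st) (stD st :|: S).

(* step 2 loop at level j, with any choice of the deleted edges;
   the nat counts insertions into the certificate *)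
Inductive prune (j : nat) : state -> state -> nat -> Prop :=
| prune_done st :
    (forall e, e \in stHs st j -> ~ in_small_cut (stHs st j) e) ->
    prune j st st 0
| prune_step st e st' k :
    e \in stHs st j -> in_small_cut (stHs st j) e ->
    prune j (delH j e st) st' k ->
    prune j st st' (ins st (delH j e st) + k).

(* step 3 loop at level j, with any choice of the components;
   carries the set A *)
Inductive separate (j : nat) : {set E} -> state -> {set E} -> state -> nat -> Prop :=
| sep_done A st :
    (forall C, is_comp (stHs st j) C ->
       ~ (0 < #|bnd (stGs st j) C| < delta)) ->
    separate j A st A st 0
| sep_step A st C A' st' k :
    is_comp (stHs st j) C ->
    0 < #|bnd (stGs st j) C| < delta ->
    separate j (A :|: bnd (stGs st j) C) (cutS j (bnd (stGs st j) C) st) A' st' k ->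
    separate j A st A' st' (ins st (cutS j (bnd (stGs st j) C) st) + k).

(* levels j, j+1, ..., l of CleanUp(A) *)
Inductive cleanup_from : nat -> {set E} -> state -> state -> nat -> Prop :=
| cu_end A st : cleanup_from l.+1 A st st 0
| cu_step j A st st2 A3 st3 st' k1 k2 k3 :
    j <= l ->
    prune j (remA j A st) st2 k1 ->
    separate j A st2 A3 st3 k2 ->
    cleanup_from j.+1 A3 st3 st' k3 ->
    cleanup_from j A st st' (ins st (remA j A st) + k1 + k2 + k3).

Definition cleanup (A : {set E}) (st st' : state) (k : nat) : Prop :=
  cleanup_from 0 A st st' k.

(* state built by initialization steps 2-3, given the functions r_i
   (r i : 'I_s -> 'I_m is r_i for i = 1..l, 0-based indices; r 0 unused):
   G_i := G, D := empty, H_0 := empty, H_i := H_{i-1} \cup {e_{r_i(k)}} *)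
Definition init_state (s : nat) (r : nat -> 'I_s -> E) : state :=
  State [set: E] (fun _ => [set: E])
    (fun i => [set e | [exists i' : 'I_l.+1, [exists k : 'I_s,
                 (0 < i' <= i) && (e == r i' k)]]])
    (finset.set0 : {set E}).

Definition del_state (e : E) (st : state) : state :=
  State (stG st :\ e) (stGs st) (stHs st) (stD st :\ e).

Inductive run : state -> seq E -> state -> nat -> Prop :=
| run_nil st : run st [::] st 0
| run_cons st e es st1 st2 k1 k2 :
    e \in stG st ->
    cleanup [set e] (del_state e st) st1 k1 ->
    run st1 es st2 k2 ->
    run st (e :: es) st2 (ins st (del_state e st) + k1 + k2).

End Algorithm.

Definition sample_size (R : realType) (p : R) (m : nat) : nat :=
  `|Num.ceil (p * m%:R)%R|%N.

From mathcomp Require Import all_boot.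
From mathcomp Require Import zify.

(* A set C cut off in step 3 is a component of H_j with a nonempty
   boundary in G_j; afterwards its boundary in G_j is empty, and it remains a union
   of components of H_j because G_j and H_j only lose edges.  So C differs from the
   sets cut before at level j and, together with them, forms a laminar family of
   nonempty sets of vertices, which has at most 2n members.  Each cut adds fewer
   than delta edges to D and no other step inserts into H_l \cup D, so O(l n delta)
   edges are inserted over all l+1 levels; initially H_l consists of at most
   (l+1) s sampled edges. *)

Section Laminar.
Context {T : finType}.
Implicit Types (A B C U : {set T}) (F : {set {set T}}).

Definition laminar F : Prop :=
  {in F &, forall A B, [|| A \subset B, B \subset A | [disjoint A & B]]}.

Lemma laminarS {F F'} : F' \subset F -> laminar F -> laminar F'.
Proof. by move=> /subsetP sF hF A B /sF AF /sF BF; apply: hF. Qed.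

Lemma laminar_setU1 {F C} :
  {in F, forall A, (C \subset A) || [disjoint C & A]} -> laminar F -> laminar (C |: F).
Proof.
move=> hC hF A B /setU1P[-> | AF] /setU1P[-> | BF]; rewrite ?subxx //.
- by case/orP: (hC B BF) => ->; rewrite ?orbT.
- by case/orP: (hC A AF) => [-> | dCA]; rewrite ?orbT // disjoint_sym dCA !orbT.
- exact: hF.
Qed.

Lemma laminar_setD1 {F} x : laminar F -> laminar [set A :\ x | A in F].
Proof.
move=> hF _ _ /imsetP[A AF ->] /imsetP[B BF ->].
case/or3P: (hF A B AF BF) => [AB | BA | dAB].
- by rewrite (setSD _ AB).
- by rewrite (setSD _ BA) orbT.
- by rewrite (disjointWl (subD1set A x)) ?(disjointWr (subD1set B x)) ?orbT.
Qed.

Lemma laminar_twins_le1 {F} x :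
  laminar F -> set0 \notin F -> #|[set A in F | (x \in A) && (A :\ x \in F)]| <= 1.
Proof.
move=> hF F0; apply/card_le1_eqP => A B.
have twins_eq A' B' : A' \in F -> x \in A' -> A' :\ x \in F ->
    B' \in F -> x \in B' -> B' :\ x \in F -> A' \subset B' -> A' = B'.
  move=> A'F xA' A'xF B'F xB' B'xF sAB.
  case/or3P: (hF A' (B' :\ x) A'F B'xF) => [/subsetP/(_ x xA') | sBA | dAB].
  - by rewrite !inE eqxx.
  - by apply/eqP; rewrite eqEsubset sAB /= -(setD1K xB') subUset sub1set xA'.
  - have : A' :\ x != set0 by apply: contraNneq F0 => <-.
    by move=> /(subsetC_disjoint dAB)/(_ (subD1set A' x)); rewrite setSD.
rewrite !inE => /and3P[AF xA AxF] /and3P[BF xB BxF].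
case/or3P: (hF A B AF BF) => [sAB | sBA | dAB].
- exact/esym/twins_eq.
- exact: twins_eq.
- by move: dAB; rewrite -setI_eq0 => /eqP/setP/(_ x); rewrite !inE xA xB.
Qed.

(* Removing a point [x] of [U]: shaving [x] off every member is injective except on
   the twins above, and the shaved family lives in [U :\ x]. *)
Lemma laminar_card_le {U F} :
  laminar F -> set0 \notin F -> F \subset powerset U -> #|F| <= 2 * #|U|.
Proof.
have [k] := ubnP #|U|; elim: k U F => // k IH U F ltUk hF F0 sFU.
have [U0 | [x xU]] := set_0Vmem U.
  suff -> : F = set0 by rewrite cards0.
  apply/setP => A; rewrite inE; apply: contraNF F0 => AF.
  by move/subsetP: sFU => /(_ A AF); rewrite inE U0 subset0 => /eqP <-.
pose Z := [set A in F | (x \in A) && (A :\ x \in F)].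
pose F' := [set A :\ x | A in F] :\ set0.
have cardF' : #|F'| <= 2 * #|U :\ x|.
  apply: IH; first by rewrite (cardsD1 x U) xU in ltUk.
  - exact: laminarS (subD1set _ _) (laminar_setD1 x hF).
  - by rewrite setD11.
  - apply/subsetP => _ /setD1P[_ /imsetP[A AF ->]].
    by move/subsetP: sFU => /(_ A AF); rewrite !inE => /setSD->.
have cardFZ : #|F :\: Z| <= #|F'| + 1.
  pose unshave Y := if Y \in F then Y else x |: Y.
  have shaveK : {in F :\: Z, cancel (fun A => A :\ x) unshave}.
    move=> A /setDP[AF]; rewrite inE AF /unshave /=.
    have [xA /= /negbTE -> | xA _] := boolP (x \in A); first by rewrite setD1K.
    by rewrite (setDidPl _) ?AF // disjoint_sym disjoints1.
  apply: (@leq_trans #|[set A :\ x | A in F]|).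
    by rewrite -(card_in_imset (can_in_inj shaveK)) subset_leq_card ?imsetS ?subsetDl.
  by rewrite (cardsD1 set0 [set _ | _ in F]) addnC leq_add2l leq_b1.
have cardZ : #|Z| <= 1 := laminar_twins_le1 x hF F0.
rewrite -(cardsID Z F).
apply: leq_trans (leq_add (leq_trans (subset_leq_card (subsetIr F Z)) cardZ)
                          (leq_trans cardFZ (leq_add cardF' (leqnn 1)))) _.
by rewrite (cardsD1 x U) xU /=; lia.
Qed.

End Laminar.

Lemma leq_card_setU {T : finType} (A B : {set T}) : #|A :|: B| <= #|A| + #|B|.
Proof. by rewrite -cardsUI leq_addr. Qed.

Section Accounting.
Variables (n m : nat) (ends : 'I_m -> 'I_n * 'I_n) (c delta l : nat).
Local Notation V := 'I_n.
Local Notation E := 'I_m.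
Local Notation state := (state m).
Local Notation bnd := (bnd ends).
Implicit Types (G H S : {set E}) (A C : {set V}) (st : state) (j : nat).
Implicit Types (F : nat -> {set {set V}}) (k : nat).

Definition adj_closed H A : Prop :=
  forall u v, connect (adj ends H) u v -> (u \in A) = (v \in A).

Lemma adj_sym H : symmetric (adj ends H).
Proof.
by move=> x y; apply/existsP/existsP => -[e /andP[eH he]]; exists e; rewrite eH orbC.
Qed.

Lemma adj_closedS {H H' A} : H' \subset H -> adj_closed H A -> adj_closed H' A.
Proof.
move=> sH hA u v uv; apply: hA; apply: connect_sub uv => x y /existsP[e /andP[eH he]].
by apply/connect1/existsP; exists e; rewrite (subsetP sH e eH).
Qed.

Lemma comp_adj_closed {H C} : is_comp ends H C -> adj_closed H C.
Proof.
move=> [x ->] u v uv; rewrite !inE.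
by rewrite (same_connect_r (sym_connect_sym (adj_sym H)) uv).
Qed.

Lemma comp_neq0 {H C} : is_comp ends H C -> C != set0.
Proof. by move=> [x ->]; apply/set0Pn; exists x; rewrite inE connect0. Qed.

Lemma comp_subset_or_disjoint {H C A} :
  is_comp ends H C -> adj_closed H A -> (C \subset A) || [disjoint C & A].
Proof.
move=> [x defC] hA; have [xA | xA] := boolP (x \in A).
  by apply/orP; left; apply/subsetP => y; rewrite defC inE => /hA <-.
apply/orP; right; rewrite -setI_eq0; apply/eqP/setP => y; rewrite !inE defC inE.
by apply/negbTE; apply: contra xA => /andP[/hA ->].
Qed.

Lemma bndS {G G'} A : G' \subset G -> bnd G' A \subset bnd G A.
Proof. by move=> sG; apply/subsetP => e; rewrite !inE => /andP[/(subsetP sG) -> ->]. Qed.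

Lemma bnd_setD_bnd G A : bnd (G :\: bnd G A) A = set0.
Proof. by apply/setP => e; rewrite !inE; case: (e \in G); rewrite !(andbT, andbF, andNb). Qed.

Lemma upd_subset (f : nat -> {set E}) (j i : nat) (X : {set E}) :
  X \subset f j -> upd f j X i \subset f i.
Proof. by rewrite /upd; case: eqP => [-> // | _ _]; exact: subxx. Qed.

Definition cut_record st (F : nat -> {set {set V}}) : Prop :=
  forall j, [/\ laminar (F j), set0 \notin F j &
    {in F j, forall A, bnd (stGs st j) A = set0 /\ adj_closed (stHs st j) A}].

Definition record_size (F : nat -> {set {set V}}) : nat := \sum_(j < l.+1) #|F j|.

Lemma cut_record_nil st : cut_record st (fun _ => set0).
Proof. by move=> j; split=> [A B | | A]; rewrite ?inE. Qed.

Lemma record_size_nil : record_size (fun _ => set0) = 0.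
Proof. by rewrite /record_size big1 // => j _; rewrite cards0. Qed.

Lemma record_size_le {st F} : cut_record st F -> record_size F <= l.+1 * (2 * n).
Proof.
move=> hF; have card_bound (j : 'I_l.+1) : #|F j| <= 2 * n.
  have [lamF F0 _] := hF j; rewrite -[X in 2 * X](card_ord n) -cardsT.
  by apply: laminar_card_le lamF F0 _; apply/subsetP => A _; rewrite inE subsetT.
rewrite /record_size -[X in _ <= X * _](card_ord l.+1) -sum_nat_const.
by apply: leq_sum => j _; exact: card_bound.
Qed.

Definition shrinks st st' : Prop :=
  forall j, stGs st' j \subset stGs st j /\ stHs st' j \subset stHs st j.

Lemma cut_recordS {st st' F} : shrinks st st' -> cut_record st F -> cut_record st' F.
Proof.
move=> sst hF j; have [lamF F0 hA] := hF j; have [sG sH] := sst j.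
split=> // A /hA[bA cA]; split; last exact: adj_closedS sH cA.
by apply/eqP; rewrite -subset0 -bA bndS.
Qed.

(* Potential argument: every cut costs fewer than [delta] insertions and fewer than
   [delta] edges of [D], and adds a new set to the laminar record of its level. *)
Definition charged st st' (k : nat) : Prop :=
  shrinks st st' /\ forall F, cut_record st F ->
    exists2 F', cut_record st' F' &
      k + #|stD st'| + 2 * delta * record_size F <= #|stD st| + 2 * delta * record_size F'.

Lemma charged_refl st : charged st st 0.
Proof. by split=> [j | F hF]; [rewrite !subxx | exists F]. Qed.

Lemma charged_trans {st1 st2 st3 k1 k2} :
  charged st1 st2 k1 -> charged st2 st3 k2 -> charged st1 st3 (k1 + k2).
Proof.
move=> [s12 h12] [s23 h23]; split=> [j | F /h12[F2 /h23[F3 rec3 le23] le12]].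
  case: (s12 j) (s23 j) => [G12 H12] [G23 H23].
  by rewrite (subset_trans G23 G12) (subset_trans H23 H12).
by exists F3 => //; lia.
Qed.

Lemma charged_shrink {st st'} :
  shrinks st st' -> stD st' \subset stD st -> charged st st' (ins l st st').
Proof.
move=> sst sD; have [_ sH] := sst l.
have -> : ins l st st' = 0 by apply/eqP; rewrite cards_eq0 setD_eq0 setUSS.
split=> // F hF; exists F; first exact: cut_recordS sst hF.
by rewrite add0n leq_add2r subset_leq_card.
Qed.

Definition add_cut (F : nat -> {set {set V}}) j C : nat -> {set {set V}} :=
  fun i => if i == j then C |: F j else F i.

Lemma record_size_add_cut {F j C} :
  j <= l -> C \notin F j -> record_size (add_cut F j C) = (record_size F).+1.
Proof.
move=> jl CF; have jl' : j < l.+1 by [].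
rewrite /record_size (bigD1 (Ordinal jl')) //= [in RHS](bigD1 (Ordinal jl')) //=.
rewrite {1}/add_cut eqxx cardsU1 CF add1n addSn.
congr (_ + _).+1; apply: eq_bigr => i; rewrite -val_eqE /add_cut /= => /negbTE -> //.
Qed.

Lemma cut_record_add_cut {st F j C} :
  is_comp ends (stHs st j) C -> cut_record st F ->
  cut_record (cutS j (bnd (stGs st j) C) st) (add_cut F j C).
Proof.
move=> compC hF i; rewrite /add_cut /= /upd.
have [-> | _] := eqP; last exact: hF.
have [lamF F0 hA] := hF j; split.
- apply: laminar_setU1 lamF => A /hA[_ cA]; exact: comp_subset_or_disjoint compC cA.
- by rewrite in_setU1 negb_or eq_sym (comp_neq0 compC).
- move=> A /setU1P[-> | /hA[bA cA]].
    by split; [exact: bnd_setD_bnd | exact: comp_adj_closed].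
  by split=> //; apply/eqP; rewrite -subset0 -bA bndS ?subsetDl.
Qed.

Lemma ins_cutS st j S : ins l st (cutS j S st) <= #|S|.
Proof.
rewrite /ins /cert /=; apply/subset_leq_card/subsetP => e; rewrite !inE.
by case: (e \in S); rewrite ?orbF ?orbT // andNb.
Qed.

Lemma charged_cut {st j C} :
  j <= l -> is_comp ends (stHs st j) C -> 0 < #|bnd (stGs st j) C| < delta ->
  charged st (cutS j (bnd (stGs st j) C) st) (ins l st (cutS j (bnd (stGs st j) C) st)).
Proof.
move=> jl compC /andP[bpos blt]; split=> [i | F hF].
  by split; rewrite ?upd_subset ?subsetDl ?subxx.
have CF : C \notin F j.
  by have [_ _ hA] := hF j; apply/negP => /hA[bC _]; rewrite bC cards0 in bpos.
exists (add_cut F j C); first exact: cut_record_add_cut.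
rewrite record_size_add_cut // mulnS.
have budget a d d' s w : a <= s -> d' <= d + s -> s < delta ->
    a + d' + 2 * delta * w <= d + (2 * delta + 2 * delta * w) by lia.
exact: budget (ins_cutS _ _ _) (leq_card_setU _ _) blt.
Qed.

Lemma prune_charged {j st st' k} : prune ends c l j st st' k -> charged st st' k.
Proof.
elim=> {st st' k} [st _ | st e st' k _ _ _ IH]; first exact: charged_refl.
apply: charged_trans IH; apply: charged_shrink => [i | ]; last exact: subxx.
by rewrite subxx upd_subset ?subD1set.
Qed.

Lemma separate_charged {j} {A A' : {set E}} {st st' k} :
  j <= l -> separate ends delta l j A st A' st' k -> charged st st' k.
Proof.
move=> jl; elim=> {A st A' st' k} [A st _ | A st C A' st' k compC hC _ IH].
  exact: charged_refl.
exact: charged_trans (charged_cut jl compC hC) IH.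
Qed.

Lemma cleanup_from_charged {j} {A : {set E}} {st st' k} :
  cleanup_from ends c delta l j A st st' k -> charged st st' k.
Proof.
elim=> {j A st st' k} [A st | j A st st2 A3 st3 st' k1 k2 k3 jl hp hs _ IH].
  exact: charged_refl.
have remA_charged : charged st (remA j A st) (ins l st (remA j A st)).
  by apply: charged_shrink => [i |]; rewrite ?upd_subset ?subsetDl ?subxx.
apply: charged_trans IH; apply: charged_trans (separate_charged jl hs).
exact: charged_trans remA_charged (prune_charged hp).
Qed.

Lemma run_charged {st es st' k} : run ends c delta l st es st' k -> charged st st' k.
Proof.
elim=> {st es st' k} [st | st e es st1 st2 k1 k2 _ hc _ IH]; first exact: charged_refl.
have del_charged : charged st (del_state e st) (ins l st (del_state e st)).
  by apply: charged_shrink => [i |]; rewrite ?subxx ?subD1set.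
exact: charged_trans (charged_trans del_charged (cleanup_from_charged hc)) IH.
Qed.

Lemma init_H_card {s} (r : nat -> 'I_s -> E) : #|stHs (init_state l r) l| <= l.+1 * s.
Proof.
have sub : stHs (init_state l r) l \subset [set r p.1 p.2 | p : 'I_l.+1 * 'I_s].
  apply/subsetP => e; rewrite inE => /existsP[i /existsP[k /andP[_ /eqP ->]]].
  by apply/imsetP; exists (i, k).
apply: leq_trans (subset_leq_card sub) _.
by rewrite (leq_trans (leq_imset_card _ _)) // card_prod !card_ord.
Qed.

Lemma certificate_bounds {s} {r : nat -> 'I_s -> E} {st0 k0} :
  cleanup ends c delta l set0 (init_state l r) st0 k0 ->
  #|cert l st0| <= l.+1 * (s + 4 * n * delta) /\
  forall dels st k, run ends c delta l st0 dels st k -> k <= l.+1 * (4 * n * delta).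
Proof.
have budget st F : cut_record st F -> 2 * delta * record_size F <= l.+1 * (4 * n * delta).
  move=> /record_size_le/(leq_mul (leqnn (2 * delta)))/leq_trans; apply; lia.
move=> /cleanup_from_charged[shr0 /(_ _ (cut_record_nil _))[F1 rec1 pay1]].
rewrite record_size_nil muln0 addn0 /= cards0 add0n in pay1.
split.
  rewrite /cert (leq_trans (leq_card_setU _ _)) // mulnDr leq_add //.
    exact: leq_trans (subset_leq_card (shr0 l).2) (init_H_card r).
  exact: leq_trans (leq_addl k0 _) (leq_trans pay1 (budget _ _ rec1)).
move=> dels st k /run_charged[_ /(_ _ rec1)[F2 rec2 pay2]].
have chain a b d w1 w2 : a + b <= w1 -> k + d + w1 <= b + w2 ->
    w2 <= l.+1 * (4 * n * delta) -> k <= l.+1 * (4 * n * delta) by lia.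
exact: chain pay1 pay2 (budget _ _ rec2).
Qed.

End Accounting.

From mathcomp Require Import all_order all_algebra.
From mathcomp Require Import all_classical all_reals all_analysis.
From mathcomp Require Import lra.
Import Order.TTheory GRing.Theory Num.Theory.
Local Open Scope ring_scope.

Lemma sample_size_le {R : realType} {p : R} (m : nat) :
  0 <= p -> (sample_size p m)%:R <= p * m%:R + 1.
Proof.
move=> p_ge0; have pm_ge0 : 0 <= p * m%:R by rewrite mulr_ge0.
rewrite /sample_size natr_absz ger0_norm; last by rewrite ceil_ge0 (lt_le_trans (ltrN10 R)).
by have := ceilB1_lt (p * m%:R); rewrite intrB; lra.
Qed.

Theorem lemma7 (R : realType) (al1 al2 ap ad : R) :
  0 < al1 -> 0 < al2 -> 0 < ap -> 0 < ad ->
  exists K : R, 0 < K /\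
  forall (n m : nat) (ends : 'I_m -> 'I_n * 'I_n) (c delta l : nat) (p : R),
    (forall e, (ends e).1 != (ends e).2) ->
    (1 <= c)%N -> (c < delta)%N -> (1 <= l)%N -> 0 < p < 1 ->
    (* l = Theta(log n) *)
    al1 * ln n%:R <= l%:R <= al2 * ln n%:R ->
    (* p = O(1 / log n) *)
    p * ln n%:R <= ap ->
    (* p delta = Omega(c) *)
    c%:R <= ad * (p * delta%:R) ->
    forall (r : nat -> 'I_(sample_size p m) -> 'I_m) (st0 : state m) (k0 : nat),
      cleanup ends c delta l (finset.set0 : {set 'I_m}) (init_state l r) st0 k0 ->
      (#|cert l st0|%:R <= K * (m%:R * p * ln n%:R + n%:R * delta%:R * ln n%:R))
      /\ (forall (dels : seq 'I_m) (st : state m) (k : nat),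
            run ends c delta l st0 dels st k ->
            k%:R <= K * (n%:R * delta%:R * ln n%:R)).
Proof.
move=> _ al2_gt0 _ _; exists (10 * al2); split; first lra.
move=> n m ends c delta l p _ _ c_lt_delta l_ge1 /andP[p_gt0 _] /andP[_ l_le] _ _ r st0 k0.
move=> /certificate_bounds[cert_le run_le].
(* The size bounds only use the upper bound on [l]. *)
set L := ln n%:R in l_le *; set X := n%:R * delta%:R.
have l_ge1R : 1 <= l%:R :> R by rewrite ler1n.
have lS_le : (l.+1)%:R <= 2 * (al2 * L) by rewrite -natr1; lra.
have L_gt0 : 0 < L by rewrite -(pmulr_rgt0 _ al2_gt0); lra.
have n_gt0 : (0 < n)%N.
  by rewrite lt0n; apply: contraTneq L_gt0 => n0; rewrite /L n0 ln0 // ltxx.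
have X_ge1 : 1 <= X.
  by rewrite /X -natrM ler1n muln_gt0 n_gt0 (leq_ltn_trans (leq0n c) c_lt_delta).
have s_le := sample_size_le m (ltW p_gt0).
have alL_ge0 : 0 <= al2 * L by rewrite mulr_ge0 ?ltW.
split.
  move: cert_le; rewrite -(ler_nat R) natrM natrD !natrM => cert_le.
  have pm_ge0 : 0 <= p * m%:R by rewrite mulr_ge0 ?ler0n ?ltW.
  apply: (le_trans cert_le); rewrite -mulrA -/X.
  apply: (@le_trans _ _ (2 * (al2 * L) * (p * m%:R + 5 * X))); last by nra.
  by apply: ler_pM; rewrite ?ler0n ?addr_ge0 ?mulr_ge0 ?ler0n //; lra.
move=> dels st k /run_le; rewrite -(ler_nat R) !natrM -mulrA => k_le.
apply: (le_trans k_le); rewrite -/X; nra.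
Qed.
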